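(* Let $(G,\sigma)$ be a connection graph with $\sigma$ absolutely inconsistent (i.e. $\mathcal{L}^\sigma$ invertible). Then for any distinct $i,j\in V$, $$\mathcal{R}^\sigma(i,j)=\begin{bmatrix}(\mathcal{C}^\sigma_{ii})^{-1}&0_{d\times d}\\0_{d\times d}&(\mathcal{C}^\sigma_{jj})^{-1}\end{bmatrix}.$$
   Context: A connection graph $(G,\sigma)$: finite connected weighted graph $G=(V,E,W)$, $V=\{1,\dots,n\}$, $w_{xy}>0$ iff $\{x,y\}\in E$, $\deg(x)=\sum_y w_{xy}$, and $\sigma$ mapping oriented edges to $\mathsf{O}(d)$ with $\sigma_{yx}=\sigma_{xy}^{\mathrm T}$. Connection Laplacian $\mathcal{L}=\mathcal{L}^\sigma$: $nd\times nd$ block matrix with blocks $\deg(x)I_d$ on the diagonal, $-w_{xy}\sigma_{xy}$ for $x\sim y$, $0$ otherwise; $\dagger$ = Moore–Penrose pseudoinverse. For $M=\begin{bmatrix}A&B\\C&D\end{bmatrix}$, $M/D=A-BD^\dagger C$. Conductance matrix $\mathcal{C}^\sigma(i,j)=\mathcal{L}/\mathcal{L}_{\{i,j\}^c,\{i,j\}^c}=\begin{bmatrix}\mathcal{C}^\sigma_{ii}&\mathcal{C}^\sigma_{ij}\\ \mathcal{C}^\sigma_{ji}&\mathcal{C}^\sigma_{jj}\end{bmatrix}$ (blocks ordered $i$ then $j$; the diagonal blocks are invertible). $\Omega^0_{ij}=\mathbb{E}[\prod_{\ell=1}^{T^0_j}\sigma_{X_{\ell-1}X_\ell}\mid X_0=i]$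 for the simple random walk $(X_t)$ with transition probabilities $w_{xy}/\deg(x)$ and $T^0_j=\inf\{t\ge0:X_t=j\}$. $\mathcal{W}_{i\to j}=\mathcal{L}^\dagger N_{ij}$, where $N_{ij}$ is the $nd\times d$ block column with $I_d$ at node $i$, $-(\Omega^0_{ij})^{\mathrm T}$ at node $j$, $0$ elsewhere; $\mathcal{W}_{i\to j}(x)$ is its block at $x$. $\mathcal{R}^\sigma(i,j)=\begin{bmatrix}\mathcal{W}_{i\to j}(i)&\mathcal{W}_{j\to i}(i)\\ \mathcal{W}_{i\to j}(j)&\mathcal{W}_{j\to i}(j)\end{bmatrix}$. *)

From HB Require Import structures.
From mathcomp Require Import all_boot all_order all_algebra.
From mathcomp Require Import all_classical all_reals topology normedtype sequences.
From Stdlib Require Import ClassicalEpsilon.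

Set Implicit Arguments.
Unset Strict Implicit.
Unset Printing Implicit Defensive.

Import Order.TTheory GRing.Theory Num.Theory.
Import numFieldNormedType.Exports.
Local Open Scope ring_scope.

Section ConnectionGraph.
Variables (R : realType) (n d : nat).
Variable w : 'I_n -> 'I_n -> R.           (* weights; x ~ y iff 0 < w x y *)
Variable sigma : 'I_n -> 'I_n -> 'M[R]_d.

Definition is_connection_graph : Prop :=
  [/\ forall x y, 0 <= w x y,
      forall x y, w x y = w y x,
      forall x, w x x = 0
    & forall x y, connect (fun a b => 0 < w a b) x y] /\
  [/\ forall x y, 0 < w x y -> sigma x y *m (sigma x y)^T = 1%:M
    & forall x y, 0 < w x y -> sigma y x = (sigma x y)^T].

Definition deg (x : 'I_n) : R := \sum_(y < n) w x y.

(* Index set of the nd x nd matrices: pairs (node, component). *)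
Definition idx := ('I_n * 'I_d)%type.
Definition ND := #|{: idx}|.

(* Entries of the connection Laplacian, indexed by pairs (node, component):
   block deg(x) I_d on the diagonal, -w_xy sigma_xy off the diagonal
   (which is 0 when x, y are not adjacent since then w x y = 0). *)
Definition lapf (u v : idx) : R :=
  if u.1 == v.1 then deg u.1 * (u.2 == v.2)%:R
  else - w u.1 v.1 * sigma u.1 v.1 u.2 v.2.

Definition lapmx : 'M[R]_ND := \matrix_(a, b) lapf (enum_val a) (enum_val b).

Definition blockof m (M : 'M[R]_(ND, m)) (x : 'I_n) : 'M[R]_(d, m) :=
  \matrix_(k, l) M (enum_rank (x, k)) l.

End ConnectionGraph.

Definition is_MP_pinv (R : realType) m p (A : 'M[R]_(m, p)) (X : 'M[R]_(p, m)) :=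
  [/\ A *m X *m A = A, X *m A *m X = X,
      (A *m X)^T = A *m X & (X *m A)^T = X *m A].

Definition pinvmp (R : realType) m p (A : 'M[R]_(m, p)) : 'M[R]_(p, m) :=
  epsilon (inhabits 0) (is_MP_pinv A).

Section Conductance.
Variables (R : realType) (n d : nat).
Variable w : 'I_n -> 'I_n -> R.
Variable sigma : 'I_n -> 'I_n -> 'M[R]_d.
Variables (i j : 'I_n).

Definition compl_ij : {set idx n d} := [set u | (u.1 != i) && (u.1 != j)].

Definition Dsub : 'M[R]_#|compl_ij| :=
  \matrix_(a, b) lapf w sigma (enum_val a) (enum_val b).

(* Entries of the Schur complement L / D = A - B D^dagger C,
   for u, v indices at nodes i or j. *)
Definition schurf (u v : idx n d) : R :=
  lapf w sigma u v -
  \sum_(a < #|compl_ij|) \sum_(b < #|compl_ij|)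
     lapf w sigma u (enum_val a) * pinvmp Dsub a b * lapf w sigma (enum_val b) v.

Definition Cblock (x y : 'I_n) : 'M[R]_d :=
  \matrix_(k, l) schurf (x, k) (y, l).

End Conductance.

Section Walk.
Variables (R : realType) (n d : nat).
Variable w : 'I_n -> 'I_n -> R.
Variable sigma : 'I_n -> 'I_n -> 'M[R]_d.

Definition trans (x y : 'I_n) : R := w x y / deg w x.

Definition hits_first (i j : 'I_n) t (p : {ffun 'I_t.+1 -> 'I_n}) : bool :=
  [&& p ord0 == i, p ord_max == j &
      [forall s : 'I_t.+1, (s < t)%N ==> (p s != j)]].

Definition path_prob t (p : {ffun 'I_t.+1 -> 'I_n}) : R :=
  \prod_(l < t) trans (p (inord l)) (p (inord l.+1)).

Definition path_hol t (p : {ffun 'I_t.+1 -> 'I_n}) : 'M[R]_d :=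
  \big[mulmx/1%:M]_(l < t) sigma (p (inord l)) (p (inord l.+1)).

Definition Omega_partial (i j : 'I_n) (N : nat) : 'M[R]_d :=
  \sum_(t < N.+1) \sum_(p : {ffun 'I_t.+1 -> 'I_n} | hits_first i j p)
     path_prob p *: path_hol p.

(* Omega^0_ij = E[ prod_{l=1}^{T_j^0} sigma_{X_{l-1} X_l} | X_0 = i ]
   (entrywise limit of the partial expectations). *)
Definition Omega0 (i j : 'I_n) : 'M[R]_d :=
  \matrix_(k, l) limn (fun N => Omega_partial i j N k l).

Definition Nij (i j : 'I_n) : 'M[R]_(ND n d, d) :=
  \matrix_(a, l) let u := enum_val a in
    if u.1 == i then (u.2 == l)%:R
    else if u.1 == j then - (Omega0 i j)^T u.2 l else 0.

Definition Wij (i j : 'I_n) : 'M[R]_(ND n d, d) :=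
  pinvmp (lapmx w sigma) *m Nij i j.

Definition Rmat (i j : 'I_n) : 'M[R]_(d + d) :=
  block_mx (blockof (Wij i j) i) (blockof (Wij j i) i)
           (blockof (Wij i j) j) (blockof (Wij j i) j).

End Walk.

From HB Require Import structures.
From mathcomp Require Import all_boot all_order all_algebra.
From mathcomp Require Import all_classical all_reals topology normedtype sequences.
From Stdlib Require Import ClassicalEpsilon.
From mathcomp Require Import lra.
Import Order.TTheory GRing.Theory Num.Theory.
Import numFieldNormedType.Exports.
Local Open Scope ring_scope.
Set Implicit Arguments.
Unset Strict Implicit.
Unset Printing Implicit Defensive.

(* Let Z be the block column whose block at x is Omega^0_xj.  Conditioning on
   the first step of the walk gives Omega^0_xj = sum_y P(x,y) sigma_xy Omega^0_yj
   for x <> j, i.e. (L Z)(x) = 0 off j, while Z(j) = I.  As L is symmetric,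
   W_{i->j}(j)^T (L Z)(j) = (L W_{i->j})^T Z = N_ij^T Z = Omega^0_ij - Omega^0_ij = 0,
   and (L Z)(j) is invertible (if (L Z)(j) u = 0 then L (Z u) = 0, so u = (Z u)(j)
   = 0); hence W_{i->j}(j) = 0.  With that block gone, the rows of
   L W_{i->j} = N_ij at i and off {i, j} say that W_{i->j}(i) inverts the Schur
   complement C_ii.  The block D = L_{{i,j}^c} is invertible since
   f^T L f = 1/2 sum_{x,y} w_xy |f(x) - sigma_xy f(y)|^2 and L is invertible. *)

Section Paths.
Variable n : nat.

Definition pcons t (x : 'I_n) (q : {ffun 'I_t.+1 -> 'I_n}) : {ffun 'I_t.+2 -> 'I_n} :=
  [ffun s : 'I_t.+2 => if nat_of_ord s is k.+1 then q (inord k) else x].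

Definition pbehead t (p : {ffun 'I_t.+2 -> 'I_n}) : {ffun 'I_t.+1 -> 'I_n} :=
  [ffun s => p (lift ord0 s)].

Lemma pcons0 t x (q : {ffun 'I_t.+1 -> 'I_n}) : pcons x q ord0 = x.
Proof. by rewrite ffunE. Qed.

Lemma pcons_inord0 t x (q : {ffun 'I_t.+1 -> 'I_n}) : pcons x q (inord 0) = x.
Proof. by rewrite (inord_val ord0) pcons0. Qed.

Lemma pcons_inordS t x (q : {ffun 'I_t.+1 -> 'I_n}) k : (k < t.+1)%N ->
  pcons x q (inord k.+1) = q (inord k).
Proof. by move=> lt_k; rewrite ffunE inordK. Qed.

Lemma big_pcons_edges (T : Type) (idx : T) (op : T -> T -> T) (f : 'I_n -> 'I_n -> T)
    t x (q : {ffun 'I_t.+1 -> 'I_n}) :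
  \big[op/idx]_(l < t.+1) f (pcons x q (inord l)) (pcons x q (inord l.+1)) =
  op (f x (q ord0)) (\big[op/idx]_(l < t) f (q (inord l)) (q (inord l.+1))).
Proof.
rewrite big_ord_recl pcons_inord0 pcons_inordS // (inord_val ord0); congr (op _ _).
apply: eq_bigr => l _; have lt_l := ltn_ord l.
by rewrite lift0 !pcons_inordS // ltnS // ltnW.
Qed.

Lemma pcons_lift t x (q : {ffun 'I_t.+1 -> 'I_n}) s : pcons x q (lift ord0 s) = q s.
Proof. by rewrite ffunE /= inord_val. Qed.

Lemma pconsK t x : cancel (@pcons t x) (@pbehead t).
Proof. by move=> q; apply/ffunP => s; rewrite ffunE pcons_lift. Qed.

Lemma pcons_behead t (p : {ffun 'I_t.+2 -> 'I_n}) : pcons (p ord0) (pbehead p) = p.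
Proof.
apply/ffunP => -[[|k] lt_k]; rewrite ffunE /=; first by congr (p _); apply/val_inj.
by rewrite ffunE; congr (p _); apply/val_inj; rewrite /= /bump /= inordK.
Qed.

Lemma sum_pcons (V : nmodType) t (F : {ffun 'I_t.+2 -> 'I_n} -> V) :
  \sum_p F p = \sum_x \sum_(q : {ffun 'I_t.+1 -> 'I_n}) F (pcons x q).
Proof.
rewrite pair_big /= (reindex (fun p : {ffun _ -> _} => (p ord0, pbehead p))) /=.
  by apply: eq_bigr => p _; rewrite pcons_behead.
exists (fun u => pcons u.1 u.2) => [p _ | [x q] _] /=; first by rewrite pcons_behead.
by rewrite pcons0 pconsK.
Qed.

Lemma hits_first_pcons (i j x : 'I_n) t (q : {ffun 'I_t.+1 -> 'I_n}) : i != j ->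
  hits_first i j (pcons x q) = (x == i) && hits_first (q ord0) j q.
Proof.
move=> neq_ij; rewrite /hits_first pcons0 eqxx.
have -> : ord_max = lift ord0 (@ord_max t) by apply/val_inj.
rewrite pcons_lift; have [-> /= | //] := eqVneq x i; congr (_ && _).
apply/forallP/forallP => /= before_t s.
  by have := before_t (lift ord0 s); rewrite pcons_lift /= /bump /= add1n ltnS.
apply/implyP; case: (unliftP ord0 s) => [s' -> | ->]; last by rewrite pcons0.
by rewrite pcons_lift /= /bump /= add1n ltnS; apply/implyP/before_t.
Qed.

Lemma sum_hits_first_pcons (V : nmodType) (i j : 'I_n) t
    (F : {ffun 'I_t.+2 -> 'I_n} -> V) : i != j ->
  \sum_(p | hits_first i j p) F p =
  \sum_y \sum_(q : {ffun 'I_t.+1 -> 'I_n} | hits_first y j q) F (pcons i q).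
Proof.
move=> neq_ij; rewrite big_mkcond sum_pcons (bigD1 i) //= [X in _ + X]big1 ?addr0.
  under eq_bigr => q _ do rewrite hits_first_pcons // eqxx /=.
  rewrite -big_mkcond (partition_big (fun q : {ffun 'I_t.+1 -> 'I_n} => q ord0) predT) //=.
  by apply: eq_bigr => y _; apply: eq_bigl => q; rewrite /hits_first eqxx andbC.
by move=> x neq_xi; apply: big1 => q _; rewrite hits_first_pcons // (negbTE neq_xi).
Qed.

Lemma hits_first0 (x j : 'I_n) (p : {ffun 'I_1 -> 'I_n}) :
  hits_first x j p = (x == j) && (p == [ffun => j]).
Proof.
rewrite /hits_first (_ : ord_max = ord0); last exact/val_inj.
have -> : (p == [ffun => j]) = (p ord0 == j).
  apply/eqP/eqP => [-> | pj]; first by rewrite ffunE.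
  by apply/ffunP => s; rewrite (ord1 s) ffunE.
have -> : [forall s : 'I_1, (s < 0)%N ==> (p s != j)] by apply/forallP.
rewrite andbT; case: (eqVneq (p ord0) j) => [-> | _]; last by rewrite !andbF.
by rewrite !andbT eq_sym.
Qed.

Lemma hits_first_self (j : 'I_n) t (p : {ffun 'I_t.+2 -> 'I_n}) : hits_first j j p = false.
Proof. by apply/and3P => -[/eqP p0 _ /forallP /(_ ord0)]; rewrite p0 eqxx. Qed.

End Paths.

Section FirstStep.
Variables (R : realType) (n d : nat).
Variable w : 'I_n -> 'I_n -> R.
Variable sigma : 'I_n -> 'I_n -> 'M[R]_d.

Definition first_hit_hol (x j : 'I_n) t : 'M[R]_d :=
  \sum_(p : {ffun 'I_t.+1 -> 'I_n} | hits_first x j p) path_prob w p *: path_hol sigma p.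

Definition first_hit_prob (x j : 'I_n) t : R :=
  \sum_(p : {ffun 'I_t.+1 -> 'I_n} | hits_first x j p) path_prob w p.

Definition hit_prob (x j : 'I_n) N : R := \sum_(t < N.+1) first_hit_prob x j t.

Lemma path_prob_pcons t x (q : {ffun 'I_t.+1 -> 'I_n}) :
  path_prob w (pcons x q) = trans w x (q ord0) * path_prob w q.
Proof. exact: big_pcons_edges. Qed.

Lemma path_hol_pcons t x (q : {ffun 'I_t.+1 -> 'I_n}) :
  path_hol sigma (pcons x q) = sigma x (q ord0) *m path_hol sigma q.
Proof. exact: big_pcons_edges. Qed.

Lemma first_hit_hol_step x j t : x != j ->
  first_hit_hol x j t.+1 = \sum_y trans w x y *: (sigma x y *m first_hit_hol y j t).
Proof.
move=> neq_xj; rewrite /first_hit_hol sum_hits_first_pcons //; apply: eq_bigr => y _.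
rewrite mulmx_sumr scaler_sumr; apply: eq_bigr => q /and3P[/eqP q0 _ _].
by rewrite path_prob_pcons path_hol_pcons q0 -scalerA -scalemxAr.
Qed.

Lemma first_hit_prob_step x j t : x != j ->
  first_hit_prob x j t.+1 = \sum_y trans w x y * first_hit_prob y j t.
Proof.
move=> neq_xj; rewrite /first_hit_prob sum_hits_first_pcons //; apply: eq_bigr => y _.
rewrite mulr_sumr; apply: eq_bigr => q /and3P[/eqP q0 _ _].
by rewrite path_prob_pcons q0.
Qed.

Lemma first_hit_hol0 x j : first_hit_hol x j 0 = if x == j then 1%:M else 0.
Proof.
rewrite /first_hit_hol; under eq_bigl => p do rewrite hits_first0.
case: (eqVneq x j) => _ /=; last by rewrite big_pred0.
by rewrite (big_pred1 [ffun => j]) // /path_prob /path_hol !big_ord0 scale1r.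
Qed.

Lemma first_hit_prob0 x j : first_hit_prob x j 0 = if x == j then 1 else 0.
Proof.
rewrite /first_hit_prob; under eq_bigl => p do rewrite hits_first0.
case: (eqVneq x j) => _ /=; last by rewrite big_pred0.
by rewrite (big_pred1 [ffun => j]) // /path_prob big_ord0.
Qed.

Lemma Omega_partialS x j N :
  Omega_partial w sigma x j N.+1 = Omega_partial w sigma x j N + first_hit_hol x j N.+1.
Proof. exact: big_ord_recr. Qed.

Lemma hit_probS x j N : hit_prob x j N.+1 = hit_prob x j N + first_hit_prob x j N.+1.
Proof. exact: big_ord_recr. Qed.

Lemma Omega_partial_self j N : Omega_partial w sigma j j N = 1%:M.
Proof.
rewrite /Omega_partial big_ord_recl -/(first_hit_hol j j 0) first_hit_hol0 eqxx.
by rewrite big1 ?addr0 // => t _; rewrite big_pred0 // => p; rewrite hits_first_self.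
Qed.

Lemma hit_prob_self j N : hit_prob j j N = 1.
Proof.
rewrite /hit_prob big_ord_recl first_hit_prob0 eqxx.
rewrite big1 ?addr0 // => t _.
by rewrite /first_hit_prob big_pred0 // => p; rewrite hits_first_self.
Qed.

Lemma Omega_partial_step x j N : x != j ->
  Omega_partial w sigma x j N.+1 =
  \sum_y trans w x y *: (sigma x y *m Omega_partial w sigma y j N).
Proof.
move=> neq_xj; rewrite /Omega_partial big_ord_recl -/(first_hit_hol x j 0).
rewrite first_hit_hol0 (negbTE neq_xj) add0r.
under eq_bigr => t _ do rewrite -/(first_hit_hol x j _) lift0 first_hit_hol_step //.
rewrite exchange_big /=; apply: eq_bigr => y _.
by rewrite mulmx_sumr scaler_sumr.
Qed.

Lemma hit_prob_step x j N : x != j ->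
  hit_prob x j N.+1 = \sum_y trans w x y * hit_prob y j N.
Proof.
move=> neq_xj; rewrite /hit_prob big_ord_recl first_hit_prob0 (negbTE neq_xj) add0r.
under eq_bigr => t _ do rewrite lift0 first_hit_prob_step //.
by rewrite exchange_big /=; apply: eq_bigr => y _; rewrite mulr_sumr.
Qed.

End FirstStep.

Lemma orthogonal_entry_le1 (R : realFieldType) d (O : 'M[R]_d) k l :
  O *m O^T = 1%:M -> `|O k l| <= 1.
Proof.
move=> orthoO; have row_norm1 : \sum_m O k m ^+ 2 = 1.
  have := congr1 (fun M : 'M[R]_d => M k k) orthoO; rewrite !mxE eqxx mulr1n => <-.
  by apply: eq_bigr => m _; rewrite mxE expr2.
have sq_le1 : O k l ^+ 2 <= 1.
  by rewrite -row_norm1 (bigD1 l) //= lerDl sumr_ge0 // => m _; apply: sqr_ge0.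
by rewrite -(@expr_le1 _ 2) // real_normK // num_real.
Qed.

Lemma orthogonal_bigmul (R : comPzRingType) d t (O : 'I_t -> 'M[R]_d) :
  (forall l, O l *m (O l)^T = 1%:M) ->
  (\big[mulmx/1%:M]_(l < t) O l) *m (\big[mulmx/1%:M]_(l < t) O l)^T = 1%:M.
Proof.
elim: t O => [|t IH] O orthoO; first by rewrite big_ord0 trmx1 mulmx1.
rewrite big_ord_recl trmx_mul mulmxA -(mulmxA (O ord0)) IH // mulmx1.
exact: orthoO.
Qed.

Section HittingBounds.
Variables (R : realType) (n d : nat).
Variable w : 'I_n -> 'I_n -> R.
Variable sigma : 'I_n -> 'I_n -> 'M[R]_d.
Hypothesis w_ge0 : forall x y, 0 <= w x y.
Hypothesis sigma_orthogonal :
  forall x y, 0 < w x y -> sigma x y *m (sigma x y)^T = 1%:M.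

Lemma deg_ge0 x : 0 <= deg w x.
Proof. exact: sumr_ge0. Qed.

Lemma trans_ge0 x y : 0 <= trans w x y.
Proof. by rewrite divr_ge0 ?deg_ge0. Qed.

Lemma sum_trans_le1 x : \sum_y trans w x y <= 1.
Proof.
rewrite -mulr_suml -/(deg w x).
by have [->|deg_neq0] := eqVneq (deg w x) 0; rewrite ?mul0r ?divff.
Qed.

Lemma path_prob_ge0 t (p : {ffun 'I_t.+1 -> 'I_n}) : 0 <= path_prob w p.
Proof. by apply: prodr_ge0 => l _; apply: trans_ge0. Qed.

Lemma first_hit_prob_ge0 x j t : 0 <= first_hit_prob w x j t.
Proof. by apply: sumr_ge0 => p _; apply: path_prob_ge0. Qed.

Lemma hit_prob_le1 j N x : hit_prob w x j N <= 1.
Proof.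
elim: N x => [|N IH] x.
  by rewrite /hit_prob big_ord1 first_hit_prob0; case: (x == j).
have [->|neq_xj] := eqVneq x j; first by rewrite hit_prob_self.
rewrite hit_prob_step //; apply: le_trans (sum_trans_le1 x).
by apply: ler_sum => y _; rewrite ler_piMr ?trans_ge0 ?IH.
Qed.

Lemma path_hol_orthogonal t (p : {ffun 'I_t.+1 -> 'I_n}) : path_prob w p != 0 ->
  path_hol sigma p *m (path_hol sigma p)^T = 1%:M.
Proof.
move=> prob_neq0; apply: orthogonal_bigmul => l; apply: sigma_orthogonal.
have : trans w (p (inord l)) (p (inord l.+1)) != 0.
  by apply: contra prob_neq0 => /eqP trans0; rewrite /path_prob (bigD1 l) //= trans0 mul0r.
by rewrite lt0r w_ge0 andbT; apply: contra => /eqP w0; rewrite /trans w0 mul0r.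
Qed.

Lemma first_hit_hol_bound x j t k l :
  `|first_hit_hol w sigma x j t k l| <= first_hit_prob w x j t.
Proof.
rewrite summxE; apply: le_trans (ler_norm_sum _ _ _) _; apply: ler_sum => p _.
rewrite mxE normrM ger0_norm ?path_prob_ge0 //.
have [->|prob_neq0] := eqVneq (path_prob w p) 0; first by rewrite mul0r.
by rewrite ler_piMr ?path_prob_ge0 // orthogonal_entry_le1 // path_hol_orthogonal.
Qed.

(* Entrywise |first_hit_hol| <= first_hit_prob, so both [hit_prob] and
   [hit_prob + Omega_partial] are nondecreasing, bounded by 1 and 2. *)
Lemma Omega_partial_cvg x j k l : cvgn (fun N => Omega_partial w sigma x j N k l).
Proof.
have partial_le N : `|Omega_partial w sigma x j N k l| <= hit_prob w x j N.
  rewrite summxE; apply: le_trans (ler_norm_sum _ _ _) _.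
  by apply: ler_sum => t _; apply: first_hit_hol_bound.
have hit_cvg : cvgn (hit_prob w x j).
  apply: nondecreasing_is_cvgn; last by exists 1 => _ [N _ <-]; apply: hit_prob_le1.
  by apply/nondecreasing_seqP => N; rewrite hit_probS lerDl first_hit_prob_ge0.
have sum_cvg : cvgn (hit_prob w x j \+ fun N => Omega_partial w sigma x j N k l).
  apply: nondecreasing_is_cvgn.
    apply/nondecreasing_seqP => N.
    rewrite /= hit_probS Omega_partialS mxE addrACA lerDl -lerBlDr sub0r.
    have := first_hit_hol_bound x j N.+1 k l; rewrite ler_norml => /andP[lb _].
    by rewrite lerNl.
  exists 2 => _ [N _ <-]; rewrite -[2]/(1 + 1 : R) lerD ?hit_prob_le1 //.
  by rewrite (le_trans (ler_norm _)) // (le_trans (partial_le N)) ?hit_prob_le1.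
have -> : (fun N => Omega_partial w sigma x j N k l) =
    (hit_prob w x j \+ fun N => Omega_partial w sigma x j N k l) - hit_prob w x j.
  by apply: funext => N /=; rewrite addrC addKr.
exact: is_cvgB.
Qed.

Lemma Omega0_self j : Omega0 w sigma j j = 1%:M.
Proof.
apply/matrixP => k l; rewrite mxE.
under eq_fun do rewrite Omega_partial_self.
by apply: cvg_lim => //; apply: cvg_cst.
Qed.

Lemma Omega0_harmonic x j : x != j ->
  Omega0 w sigma x j = \sum_y trans w x y *: (sigma x y *m Omega0 w sigma y j).
Proof.
move=> neq_xj; apply/matrixP => k l; rewrite [LHS]mxE summxE.
apply/cvg_lim => //; rewrite -cvg_shiftS /=.
under eq_fun do rewrite Omega_partial_step // summxE.
apply: cvg_big => [|y _]; first exact: add_continuous.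
rewrite !mxE; under eq_fun do rewrite !mxE.
apply: cvgMl_tmp; apply: cvg_big => [|m _]; first exact: add_continuous.
by rewrite mxE; apply: cvgMl_tmp; apply: Omega_partial_cvg.
Qed.

End HittingBounds.

Lemma sum_idx (V : nmodType) n d (F : idx n d -> V) : \sum_u F u = \sum_x \sum_k F (x, k).
Proof. by rewrite pair_big /=; apply: eq_bigr => -[]. Qed.

Section LaplacianForm.
Variables (R : realType) (n d : nat).
Variable w : 'I_n -> 'I_n -> R.
Variable sigma : 'I_n -> 'I_n -> 'M[R]_d.
Hypothesis w_ge0 : forall x y, 0 <= w x y.
Hypothesis w_sym : forall x y, w x y = w y x.
Hypothesis w_irrefl : forall x, w x x = 0.
Hypothesis sigma_orthogonal :
  forall x y, 0 < w x y -> sigma x y *m (sigma x y)^T = 1%:M.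

Variable f : idx n d -> R.
Let transport x y k := \sum_l sigma x y k l * f (y, l).
Let sqnorm x := \sum_k f (x, k) ^+ 2.
Let inner x y := \sum_k f (x, k) * transport x y k.

Lemma lapf_pair x k y m : lapf w sigma (x, k) (y, m) =
  (x == y)%:R * deg w x * (k == m)%:R - w x y * sigma x y k m.
Proof.
rewrite /lapf /=; case: eqVneq => [<- | _]; first by rewrite w_irrefl mul0r subr0 mul1r.
by rewrite !mul0r add0r mulNr.
Qed.

Lemma lapf_row_sum x k :
  \sum_v lapf w sigma (x, k) v * f v = \sum_y w x y * (f (x, k) - transport x y k).
Proof.
rewrite sum_idx; under eq_bigr => y _ do under eq_bigr => m _ do rewrite lapf_pair mulrBl.
under eq_bigr => y _ do rewrite sumrB.
rewrite sumrB (bigD1 x) //= (bigD1 k) //= !eqxx mul1r mulr1.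
rewrite [X in _ + X + _]big1 ?addr0 => [|y neq_yx]; last first.
  by rewrite big1 // => m _; rewrite eq_sym (negbTE neq_yx) !mul0r.
rewrite [X in _ + X - _]big1 ?addr0 => [|m neq_mk]; last first.
  by rewrite eq_sym (negbTE neq_mk) mulr0 mul0r.
under [RHS]eq_bigr => y _ do rewrite mulrBr.
rewrite sumrB -mulr_suml; congr (_ - _).
by apply: eq_bigr => y _; rewrite mulr_sumr; apply: eq_bigr => m _; rewrite mulrA.
Qed.

Definition lap_form := \sum_u \sum_v f u * lapf w sigma u v * f v.

Lemma lap_formE : lap_form = \sum_x \sum_y w x y * (sqnorm x - inner x y).
Proof.
rewrite /lap_form sum_idx; apply: eq_bigr => x _.
under eq_bigr => k _ do under eq_bigr => v _ do rewrite -mulrA.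
under eq_bigr => k _ do rewrite -mulr_sumr lapf_row_sum mulr_sumr.
rewrite exchange_big /=; apply: eq_bigr => y _.
rewrite -sumrB mulr_sumr; apply: eq_bigr => k _.
by rewrite mulrCA mulrBr expr2.
Qed.

Lemma sqnorm_transport x y : 0 < w x y -> \sum_k transport x y k ^+ 2 = sqnorm y.
Proof.
move=> pos_xy; pose v : 'cV[R]_d := \col_l f (y, l).
have colE (u : 'cV[R]_d) : (u^T *m u) 0 0 = \sum_k u k 0 ^+ 2.
  by rewrite mxE; apply: eq_bigr => k _; rewrite mxE expr2.
transitivity (((sigma x y *m v)^T *m (sigma x y *m v)) 0 0).
  rewrite colE; apply: eq_bigr => k _; rewrite mxE; congr (_ ^+ 2).
  by apply: eq_bigr => l _; rewrite mxE.
rewrite trmx_mul mulmxA -(mulmxA v^T) mulmx1C ?sigma_orthogonal // mulmx1 colE.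
by apply: eq_bigr => k _; rewrite mxE.
Qed.

Lemma weighted_sq_dist x y : w x y * \sum_k (f (x, k) - transport x y k) ^+ 2 =
  w x y * sqnorm x - (w x y * inner x y) *+ 2 + w x y * sqnorm y.
Proof.
have [->|neq0] := eqVneq (w x y) 0; first by rewrite !mul0r mul0rn subr0 addr0.
have pos_xy : 0 < w x y by rewrite lt0r neq0 w_ge0.
rewrite -(sqnorm_transport pos_xy) -mulrnAr -mulrBr -mulrDr.
by rewrite -sumrMnl -sumrB -big_split; congr (_ * _); apply: eq_bigr => k _; rewrite sqrrB.
Qed.

Lemma lap_form_sum_sq :
  lap_form *+ 2 = \sum_x \sum_y w x y * \sum_k (f (x, k) - transport x y k) ^+ 2.
Proof.
set P := \sum_x \sum_y w x y * sqnorm x; set Q := \sum_x \sum_y w x y * inner x y.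
have -> : lap_form = P - Q.
  rewrite lap_formE -sumrB; apply: eq_bigr => x _.
  by rewrite -sumrB; apply: eq_bigr => y _; rewrite mulrBr.
have sym : \sum_x \sum_y w x y * sqnorm y = P.
  by rewrite exchange_big; apply: eq_bigr => x _; apply: eq_bigr => y _; rewrite w_sym.
under eq_bigr => x _ do under eq_bigr => y _ do rewrite weighted_sq_dist.
under eq_bigr => x _ do rewrite big_split sumrB /= sumrMnl.
by rewrite big_split sumrB /= sumrMnl sym -/P -/Q !mulr2n; lra.
Qed.

Lemma lap_form_eq0 : lap_form = 0 -> forall u, \sum_v lapf w sigma u v * f v = 0.
Proof.
move=> form0 [x k]; rewrite lapf_row_sum.
pose edge x' y := w x' y * \sum_m (f (x', m) - transport x' y m) ^+ 2.
have edge_ge0 x' y : 0 <= edge x' y by rewrite mulr_ge0 ?sumr_ge0 // => m _; apply: sqr_ge0.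
have edge0 y : edge x y = 0.
  have /psumr_eq0P rows0 : \sum_x' \sum_y edge x' y = 0 by rewrite -lap_form_sum_sq form0 mul0rn.
  have /psumr_eq0P := rows0 (fun x' _ => sumr_ge0 _ (fun y _ => edge_ge0 x' y)) x isT.
  by apply.
apply: big1 => y _; have [->|neq0] := eqVneq (w x y) 0; first by rewrite mul0r.
have /eqP := edge0 y; rewrite mulf_eq0 (negbTE neq0) => /eqP /psumr_eq0P sq0.
have /eqP := sq0 (fun m _ => sqr_ge0 _) k isT.
by rewrite sqrf_eq0 subr_eq0 => /eqP ->; rewrite subrr mulr0.
Qed.

End LaplacianForm.

Lemma unitmx_ker0 (R : fieldType) m (A : 'M[R]_m) :
  (forall v : 'cV_m, A *m v = 0 -> v = 0) -> A \in unitmx.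
Proof.
move=> ker0; rewrite -unitmx_tr -row_free_unit -kermx_eq0; apply/eqP/row_matrixP => k.
rewrite row0; have := mulmx_ker A^T.
move=> /(congr1 (fun M => (row k M)^T)); rewrite row_mul trmx_mul trmxK row0 trmx0.
by move/ker0 => /(congr1 trmx); rewrite trmxK trmx0.
Qed.

Lemma pinvmp_unit (R : realType) m (A : 'M[R]_m) : A \in unitmx -> pinvmp A = invmx A.
Proof.
move=> unitA; have inv_MP : is_MP_pinv A (invmx A).
  by split; rewrite ?mulmxV ?mulVmx ?mul1mx ?mulmx1 ?trmx1.
have := epsilon_spec (inhabits 0) (is_MP_pinv A) (ex_intro _ _ inv_MP).
rewrite -/(pinvmp A) => -[AXA _ _ _].
transitivity (invmx A *m (A *m pinvmp A *m A) *m invmx A).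
  by rewrite !mulmxA mulVmx // mul1mx -mulmxA mulmxV // mulmx1.
by rewrite AXA mulVmx // mul1mx.
Qed.

Section LaplacianMatrix.
Variables (R : realType) (n d : nat).
Variable w : 'I_n -> 'I_n -> R.
Variable sigma : 'I_n -> 'I_n -> 'M[R]_d.

Local Notation L := (lapmx w sigma).

Lemma sum_ND (V : nmodType) (F : 'I_(ND n d) -> V) :
  \sum_a F a = \sum_u F (enum_rank u).
Proof.
by rewrite (reindex enum_rank) //; exists enum_val => ? _; rewrite ?enum_rankK ?enum_valK.
Qed.

Lemma lapmx_mulE m (M : 'M[R]_(ND n d, m)) u l :
  (L *m M) (enum_rank u) l = \sum_v lapf w sigma u v * M (enum_rank v) l.
Proof. by rewrite mxE sum_ND; apply: eq_bigr => v _; rewrite mxE !enum_rankK. Qed.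

Lemma blockof_mul m p (M : 'M[R]_(ND n d, m)) (B : 'M[R]_(m, p)) x :
  blockof (M *m B) x = blockof M x *m B.
Proof. by apply/matrixP => k l; rewrite !mxE; apply: eq_bigr => c _; rewrite mxE. Qed.

Lemma blockof_eq0 m (M : 'M[R]_(ND n d, m)) : (forall x, blockof M x = 0) -> M = 0.
Proof.
move=> blocks0; apply/matrixP => a l; rewrite -[a]enum_valK; case: (enum_val a) => x k.
by have /matrixP/(_ k l) := blocks0 x; rewrite !mxE.
Qed.

Lemma trmx_mul_blocks m p (A : 'M[R]_(ND n d, m)) (B : 'M[R]_(ND n d, p)) :
  A^T *m B = \sum_x (blockof A x)^T *m blockof B x.
Proof.
apply/matrixP => k l; rewrite mxE summxE sum_ND sum_idx; apply: eq_bigr => x _.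
by rewrite mxE; apply: eq_bigr => m' _; rewrite !mxE.
Qed.

End LaplacianMatrix.

Lemma sum_indicator (S : pzSemiRingType) (T : finType) (F : T -> S) t0 :
  \sum_t (t0 == t)%:R * F t = F t0.
Proof.
rewrite (bigD1 t0) //= eqxx mul1r big1 ?addr0 // => t neq_t.
by rewrite eq_sym (negbTE neq_t) mul0r.
Qed.

Section InvertibleLaplacian.
Variables (R : realType) (n d : nat).
Variable w : 'I_n -> 'I_n -> R.
Variable sigma : 'I_n -> 'I_n -> 'M[R]_d.
Hypothesis w_ge0 : forall x y, 0 <= w x y.
Hypothesis w_sym : forall x y, w x y = w y x.
Hypothesis w_irrefl : forall x, w x x = 0.
Hypothesis sigma_orthogonal :
  forall x y, 0 < w x y -> sigma x y *m (sigma x y)^T = 1%:M.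
Hypothesis sigma_tr : forall x y, 0 < w x y -> sigma y x = (sigma x y)^T.
Hypothesis L_unit : lapmx w sigma \in unitmx.

Local Notation L := (lapmx w sigma).

Lemma lapf_sym u v : lapf w sigma u v = lapf w sigma v u.
Proof.
rewrite /lapf eq_sym; have [-> | _] := eqVneq v.1 u.1; first by rewrite eq_sym.
rewrite w_sym; have [-> | w_neq0] := eqVneq (w v.1 u.1) 0; first by rewrite oppr0 !mul0r.
by rewrite sigma_tr ?lt0r ?w_neq0 ?w_ge0 // mxE.
Qed.

Lemma lapmx_tr : L^T = L.
Proof. by apply/matrixP => a b; rewrite !mxE lapf_sym. Qed.

Lemma lapf_ker0 (f : idx n d -> R) :
  (forall u, \sum_v lapf w sigma u v * f v = 0) -> forall u, f u = 0.
Proof.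
move=> Lf0 u; pose z : 'cV[R]_(ND n d) := \col_a f (enum_val a).
have Lz0 : L *m z = 0.
  apply/matrixP => a l; rewrite -[a]enum_valK lapmx_mulE !mxE -[RHS](Lf0 (enum_val a)).
  by apply: eq_bigr => v _; rewrite mxE enum_rankK.
have /matrixP/(_ (enum_rank u) ord0) : z = 0 by rewrite -(mulKmx L_unit z) Lz0 mulmx0.
by rewrite !mxE enum_rankK.
Qed.

Lemma deg_mul_trans x y : deg w x * trans w x y = w x y.
Proof.
have [deg0 | deg_neq0] := eqVneq (deg w x) 0; last by rewrite mulrC divfK.
by rewrite deg0 mul0r (psumr_eq0P (fun z _ => w_ge0 x z) deg0).
Qed.

Section HarmonicColumn.
Variable j : 'I_n.

Definition Omega_col : 'M[R]_(ND n d, d) :=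
  \matrix_(a, l) Omega0 w sigma (enum_val a).1 j (enum_val a).2 l.

Lemma blockof_Omega_col x : blockof Omega_col x = Omega0 w sigma x j.
Proof. by apply/matrixP => k l; rewrite !mxE enum_rankK. Qed.

Lemma lap_Omega_col_off x : x != j -> blockof (L *m Omega_col) x = 0.
Proof.
move=> neq_xj; apply/matrixP => k l; rewrite [LHS]mxE [RHS]mxE lapmx_mulE.
under eq_bigr => v _ do rewrite mxE enum_rankK.
rewrite lapf_row_sum //; under eq_bigr => y _ do rewrite mulrBr.
rewrite sumrB -mulr_suml (Omega0_harmonic w_ge0 sigma_orthogonal neq_xj) summxE mulr_sumr.
by rewrite -sumrB big1 // => y _; rewrite !mxE mulrA deg_mul_trans subrr.
Qed.

Lemma lap_Omega_col_unit : blockof (L *m Omega_col) j \in unitmx.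
Proof.
apply: unitmx_ker0 => u Gu0.
have LZu0 : L *m (Omega_col *m u) = 0.
  apply: blockof_eq0 => x; rewrite mulmxA blockof_mul.
  by have [-> | neq_xj] := eqVneq x j; rewrite ?Gu0 ?lap_Omega_col_off ?mul0mx.
have Zu0 : Omega_col *m u = 0 by rewrite -(mulKmx L_unit (Omega_col *m u)) LZu0 mulmx0.
have := blockof_mul Omega_col u j; rewrite Zu0 blockof_Omega_col Omega0_self //.
by rewrite mul1mx => <-; apply/matrixP => k l; rewrite !mxE.
Qed.

End HarmonicColumn.

Section WijBlocks.
Variables i j : 'I_n.
Hypothesis neq_ij : i != j.

Local Notation W := (Wij w sigma i j).
Local Notation N := (Nij w sigma i j).
Local Notation S := (compl_ij d i j).

Lemma lapmx_Wij : L *m W = N.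
Proof. by rewrite /Wij pinvmp_unit // mulKVmx. Qed.

Lemma blockof_Nij x :
  blockof N x = if x == i then 1%:M else if x == j then - (Omega0 w sigma i j)^T else 0.
Proof.
apply/matrixP => k l; rewrite !mxE enum_rankK /=.
by case: eqP => _; [rewrite mxE | case: eqP => _; rewrite !mxE].
Qed.

Lemma Wij_target_block : blockof W j = 0.
Proof.
have neq_ji : j != i by rewrite eq_sym.
have WG0 : (blockof W j)^T *m blockof (L *m Omega_col j) j = 0.
  transitivity (W^T *m (L *m Omega_col j)).
    rewrite trmx_mul_blocks (bigD1 j) //= big1 ?addr0 // => x neq_xj.
    by rewrite lap_Omega_col_off // mulmx0.
  rewrite mulmxA -[in W^T *m L]lapmx_tr -trmx_mul lapmx_Wij trmx_mul_blocks.
  rewrite (bigD1 i) //= (bigD1 j) //= big1 ?addr0 => [|x /andP[neq_xi neq_xj]]; last first.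
    by rewrite blockof_Nij (negbTE neq_xi) (negbTE neq_xj) trmx0 mul0mx.
  rewrite !blockof_Nij !blockof_Omega_col eqxx (negbTE neq_ji) eqxx Omega0_self //.
  by rewrite trmx1 mul1mx linearN /= trmxK mulNmx mulmx1 subrr.
have : (blockof W j)^T = 0.
  by rewrite -(mulmxK (lap_Omega_col_unit j) (blockof W j)^T) WG0 mul0mx.
by move/(congr1 trmx); rewrite trmxK trmx0.
Qed.

Lemma sum_idx_split (F : idx n d -> R) :
  \sum_u F u = \sum_k F (i, k) + \sum_k F (j, k) + \sum_(c < #|S|) F (enum_val c).
Proof.
rewrite sum_idx (bigD1 i) //= (bigD1 j) 1?eq_sym //= addrA -big_enum_val; congr (_ + _).
by rewrite pair_big /=; apply: eq_big => [[x k] | [x k] _] //=; rewrite inE /= andbT.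
Qed.

Definition W_compl : 'M[R]_(#|S|, d) := \matrix_(c, l) W (enum_rank (enum_val c)) l.
Definition lap_ii : 'M[R]_d := \matrix_(k, m) lapf w sigma (i, k) (i, m).
Definition lap_icompl : 'M[R]_(d, #|S|) := \matrix_(k, c) lapf w sigma (i, k) (enum_val c).
Definition lap_compli : 'M[R]_(#|S|, d) := \matrix_(c, m) lapf w sigma (enum_val c) (i, m).

Lemma Nij_row u l : N (enum_rank u) l =
  \sum_k lapf w sigma u (i, k) * blockof W i k l +
  \sum_c lapf w sigma u (enum_val c) * W_compl c l.
Proof.
rewrite -lapmx_Wij lapmx_mulE sum_idx_split [X in _ + X + _]big1 ?addr0 => [|k _].
  by congr (_ + _); apply: eq_bigr => ? _; rewrite !mxE.
by have /matrixP/(_ k l) := Wij_target_block; rewrite !mxE => ->; rewrite mulr0.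
Qed.

Lemma Cblock_schur :
  Cblock w sigma i j i i = lap_ii - lap_icompl *m pinvmp (Dsub w sigma i j) *m lap_compli.
Proof.
apply/matrixP => k m; rewrite !mxE /schurf; congr (_ - _).
rewrite exchange_big /=; apply: eq_bigr => b _; rewrite mxE mulr_suml.
by apply: eq_bigr => a _; rewrite !mxE.
Qed.

Lemma Dsub_unit : Dsub w sigma i j \in unitmx.
Proof.
apply: unitmx_ker0 => y Dy0.
(* [f] extends [y] by zero at the nodes i and j. *)
pose f u := \sum_(c < #|S|) (enum_val c == u)%:R * y c ord0.
have f_compl c : f (enum_val c) = y c ord0.
  rewrite -[RHS](sum_indicator (fun c' => y c' ord0)).
  by apply: eq_bigr => c' _; rewrite (inj_eq enum_val_inj) eq_sym.
have lapf_f u : \sum_v lapf w sigma u v * f v = \sum_c lapf w sigma u (enum_val c) * y c ord0.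
  under eq_bigr => v _ do rewrite mulr_sumr.
  rewrite exchange_big /=; apply: eq_bigr => c _.
  by under eq_bigr => v _ do rewrite mulrCA; rewrite sum_indicator.
have form0 : lap_form w sigma f = 0.
  rewrite /lap_form; under eq_bigr => u _ do under eq_bigr => v _ do rewrite -mulrA.
  under eq_bigr => u _ do rewrite -mulr_sumr lapf_f mulr_suml.
  rewrite exchange_big /=; apply: big1 => c _.
  under eq_bigr => u _ do rewrite mulrAC.
  rewrite -mulr_suml sum_indicator.
  have /matrixP/(_ c ord0) := Dy0; rewrite !mxE => Dy0c.
  have -> : \sum_c' lapf w sigma (enum_val c) (enum_val c') * y c' ord0 = 0.
    by rewrite -[RHS]Dy0c; apply: eq_bigr => c' _; rewrite mxE.
  by rewrite mul0r.
apply/matrixP => c l; rewrite (ord1 l) mxE -f_compl.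
exact/lapf_ker0/(lap_form_eq0 w_ge0 w_sym w_irrefl sigma_orthogonal form0).
Qed.

Lemma Wij_source_block : blockof W i = invmx (Cblock w sigma i j i i).
Proof.
have row_i : lap_ii *m blockof W i + lap_icompl *m W_compl = 1%:M.
  apply/matrixP => k l; have := Nij_row (i, k) l; rewrite mxE enum_rankK /= eqxx.
  move=> Nrow; rewrite [RHS]mxE [RHS]Nrow mxE.
  by congr (_ + _); rewrite mxE; apply: eq_bigr => ? _; rewrite !mxE.
have row_compl : lap_compli *m blockof W i + Dsub w sigma i j *m W_compl = 0.
  apply/matrixP => c l; have := enum_valP c; rewrite inE => /andP[neq_i neq_j].
  have := Nij_row (enum_val c) l; rewrite mxE enum_rankK /= (negbTE neq_i) (negbTE neq_j).
  move=> Nrow; rewrite [RHS]mxE [RHS]Nrow mxE.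
  by congr (_ + _); rewrite mxE; apply: eq_bigr => ? _; rewrite !mxE.
have CW : Cblock w sigma i j i i *m blockof W i = 1%:M.
  move/eqP: row_compl; rewrite addr_eq0 => /eqP row_compl.
  rewrite Cblock_schur (pinvmp_unit Dsub_unit) mulmxBl -!mulmxA row_compl mulmxN.
  by rewrite mulKmx ?Dsub_unit // mulmxN opprK row_i.
have [C_unit _] := mulmx1_unit CW.
by rewrite -[LHS](mulKmx C_unit) CW mulmx1.
Qed.

End WijBlocks.
End InvertibleLaplacian.

Lemma compl_ijC n d (i j : 'I_n) : compl_ij d j i = compl_ij d i j.
Proof. by apply/setP => u; rewrite !inE andbC. Qed.

Lemma Cblock_sym (R : realType) n d w sigma (i j x y : 'I_n) :
  @Cblock R n d w sigma j i x y = Cblock w sigma i j x y.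
Proof. by rewrite /Cblock /schurf /Dsub compl_ijC. Qed.

Theorem proposition6p6 (R : realType) (n d : nat)
  (w : 'I_n -> 'I_n -> R) (sigma : 'I_n -> 'I_n -> 'M[R]_d) :
  is_connection_graph w sigma ->
  lapmx w sigma \in unitmx ->
  forall i j : 'I_n, i != j ->
  Rmat w sigma i j =
  block_mx (invmx (Cblock w sigma i j i i)) 0 0 (invmx (Cblock w sigma i j j j)).
Proof.
move=> [[w_ge0 w_sym w_irrefl _] [sigma_orth sigma_tr]] L_unit i j neq_ij.
have neq_ji : j != i by rewrite eq_sym.
have source := Wij_source_block w_ge0 w_sym w_irrefl sigma_orth sigma_tr L_unit.
have target := Wij_target_block w_ge0 w_sym w_irrefl sigma_orth sigma_tr L_unit.
by rewrite /Rmat !source // !target // [Cblock _ _ j i _ _]Cblock_sym.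
Qed.
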